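(* Let $\Bbbk$ be a field of characteristic $0$ and let $J$ be a special Jordan dialgebra such that $\bar J$ is a special Jordan algebra. Then $\widehat J=\bar J\oplus J$ is a special Jordan algebra.
   Context: An associative dialgebra is a vector space with bilinear $\vdash,\dashv$ satisfying $(x\dashv y)\vdash z=(x\vdash y)\vdash z$, $x\dashv(y\vdash z)=x\dashv(y\dashv z)$, $(x\vdash y)\vdash z=x\vdash(y\vdash z)$, $(x\dashv y)\dashv z=x\dashv(y\dashv z)$, $(x\vdash y)\dashv z=x\vdash(y\dashv z)$; $D^{(+)}$ is $D$ with $a\vdash_+b=\tfrac12(a\vdash b+b\dashv a)$, $a\dashv_+b=\tfrac12(a\dashv b+b\vdash a)$. A special Jordan dialgebra is a subdialgebra $J$ of some $D^{(+)}$. $\bar J=J/\mathrm{span}\{a\vdash_+b-a\dashv_+b\}$ is an ordinary algebra acting on $J$ by $\bar a\cdot v=a\vdash_+v$, $v\cdot\bar a=v\dashv_+a$; $\widehat J=\bar J\oplus J$ is the split null extension with product $(\bar a+m)(\bar b+n)=\bar a\bar b+(a\vdash_+n+m\dashv_+b)$. A Jordan algebra is special if it embeds into $A^{(+)}$ (product $\tfrac12(ab+ba)$) for an associative algebra $A$. *)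

From HB Require Import structures.
From mathcomp Require Import all_boot all_order all_algebra.
Set Implicit Arguments. Unset Strict Implicit. Unset Printing Implicit Defensive.
Import Order.TTheory GRing.Theory Num.Theory.
Local Open Scope ring_scope.

Section Defs.
Variable k : fieldType.

Definition bilinear_op (V : lmodType k) (op : V -> V -> V) : Prop :=
  (forall (a : k) (x y z : V), op (a *: x + y) z = a *: op x z + op y z) /\
  (forall (a : k) (x y z : V), op z (a *: x + y) = a *: op z x + op z y).

(* Associative dialgebra: l = |-, r = -| . *)
Definition assoc_dialgebra (V : lmodType k) (l r : V -> V -> V) : Prop :=
  [/\ bilinear_op l, bilinear_op r,
      (forall x y z, l (r x y) z = l (l x y) z),
      (forall x y z, r x (l y z) = r x (r y z)) &
      [/\ (forall x y z, l (l x y) z = l x (l y z)),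
          (forall x y z, r (r x y) z = r x (r y z)) &
          (forall x y z, r (l x y) z = l x (r y z))]].

Definition half : k := (2%:R : k)^-1.

Definition plus_left (V : lmodType k) (l r : V -> V -> V) (a b : V) : V :=
  half *: (l a b + r b a).
Definition plus_right (V : lmodType k) (l r : V -> V -> V) (a b : V) : V :=
  half *: (r a b + l b a).

Definition special_jordan_dialgebra (J : lmodType k) (lj rj : J -> J -> J) : Prop :=
  exists (D : lmodType k) (l r : D -> D -> D) (f : {linear J -> D}),
    [/\ assoc_dialgebra l r, injective f &
        forall a b, f (lj a b) = plus_left l r (f a) (f b) /\
                    f (rj a b) = plus_right l r (f a) (f b)].

Definition assoc_algebra (A : lmodType k) (m : A -> A -> A) : Prop :=
  bilinear_op m /\ associative m.

Definition special_jordan_algebra (V : lmodType k) (mul : V -> V -> V) : Prop :=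
  exists (A : lmodType k) (m : A -> A -> A) (f : {linear V -> A}),
    [/\ assoc_algebra m, injective f &
        forall x y, f (mul x y) = half *: (m (f x) (f y) + m (f y) (f x))].

Definition dispan (J : lmodType k) (lj rj : J -> J -> J) (v : J) : Prop :=
  exists (n : nat) (c : 'I_n -> k) (a b : 'I_n -> J),
    v = \sum_(i < n) c i *: (lj (a i) (b i) - rj (a i) (b i)).

Definition hat_mul (B J : lmodType k) (mulb : B -> B -> B)
  (actL : B -> J -> J) (actR : J -> B -> J) (x y : B * J) : B * J :=
  (mulb x.1 y.1, actL x.1 y.2 + actR x.2 y.1).

End Defs.

(** Represent J inside an associative dialgebra D. Both products of D kill the
    span I of the elements a ⊢ b − a ⊣ b on the appropriate side, so
    D̄ = D / I with x̄ ȳ := x ⊢ y is an associative algebra and D is a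
    D̄-bimodule via x̄ · d := x ⊢ d and d · x̄ := d ⊣ x; hence the split null
    extension D̄ ⊕ D is associative. The products of D^(+) are the
    symmetrisations of these actions, so ā + m ↦ (φ ā, (image of a in D̄), m),
    with φ the embedding of J̄ into an associative A, is a Jordan
    homomorphism from Ĵ into (A × (D̄ ⊕ D))^(+); it is injective because φ and
    the embedding of J are. *)

From Pilot Require Import Defs.
From HB Require Import structures.
From mathcomp Require Import all_boot all_order all_algebra.
From Stdlib Require Import ClassicalEpsilon FunctionalExtensionality PropExtensionality.
Set Implicit Arguments. Unset Strict Implicit.
Import GRing.Theory.
Local Open Scope ring_scope.

Section BilinearOp.
Variables (k : fieldType) (V : lmodType k) (op : V -> V -> V).
Hypothesis op_bilinear : bilinear_op op.

Lemma bilinPl c x y z : op (c *: x + y) z = c *: op x z + op y z.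
Proof. exact: op_bilinear.1. Qed.
Lemma bilinPr c x y z : op z (c *: x + y) = c *: op z x + op z y.
Proof. exact: op_bilinear.2. Qed.
Lemma bilinDl x y z : op (x + y) z = op x z + op y z.
Proof. by have := bilinPl 1 x y z; rewrite !scale1r. Qed.
Lemma bilinDr x y z : op z (x + y) = op z x + op z y.
Proof. by have := bilinPr 1 x y z; rewrite !scale1r. Qed.
Lemma bilin0l z : op 0 z = 0.
Proof. by apply: (addrI (op 0 z)); rewrite addr0 -bilinDl addr0. Qed.
Lemma bilin0r z : op z 0 = 0.
Proof. by apply: (addrI (op z 0)); rewrite addr0 -bilinDr addr0. Qed.
Lemma bilinBl x y z : op (x - y) z = op x z - op y z.
Proof.
by have := bilinPl (-1) y x z; rewrite !scaleN1r ![- _ + _]addrC.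
Qed.
Lemma bilinBr x y z : op z (x - y) = op z x - op z y.
Proof.
by have := bilinPr (-1) y x z; rewrite !scaleN1r ![- _ + _]addrC.
Qed.

End BilinearOp.

Section ProductAlgebra.
Variables (k : fieldType) (A B : lmodType k) (mA : A -> A -> A) (mB : B -> B -> B).

Definition prod_mul (x y : A * B) : A * B := (mA x.1 y.1, mB x.2 y.2).

Lemma assoc_algebra_prod :
  assoc_algebra mA -> assoc_algebra mB -> assoc_algebra prod_mul.
Proof.
move=> [[mAl mAr] mAA] [[mBl mBr] mBA]; split; first split.
- by move=> c [x1 x2] [y1 y2] [z1 z2]; rewrite /prod_mul /= mAl mBl.
- by move=> c [x1 x2] [y1 y2] [z1 z2]; rewrite /prod_mul /= mAr mBr.
by move=> [x1 x2] [y1 y2] [z1 z2]; rewrite /prod_mul /= mAA mBA.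
Qed.

End ProductAlgebra.

Section SplitNullExtension.
Variables (k : fieldType) (B M : lmodType k) (mulB : B -> B -> B).
Variables (actL : B -> M -> M) (actR : M -> B -> M).
Hypothesis mulB_assoc : assoc_algebra mulB.
Hypothesis actLPl :
  forall c b b' m, actL (c *: b + b') m = c *: actL b m + actL b' m.
Hypothesis actLPr :
  forall c b m m', actL b (c *: m + m') = c *: actL b m + actL b m'.
Hypothesis actRPl :
  forall c m m' b, actR (c *: m + m') b = c *: actR m b + actR m' b.
Hypothesis actRPr :
  forall c m b b', actR m (c *: b + b') = c *: actR m b + actR m b'.
Hypothesis actLM : forall b b' m, actL (mulB b b') m = actL b (actL b' m).
Hypothesis actRM : forall m b b', actR m (mulB b b') = actR (actR m b) b'.
Hypothesis actLR : forall b m b', actL b (actR m b') = actR (actL b m) b'.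

Lemma assoc_algebra_hat : assoc_algebra (hat_mul mulB actL actR).
Proof.
have [[mulBl mulBr] mulBA] := mulB_assoc.
have actLDr b m m' : actL b (m + m') = actL b m + actL b m'.
  by have := actLPr 1 b m m'; rewrite !scale1r.
have actRDl m m' b : actR (m + m') b = actR m b + actR m' b.
  by have := actRPl 1 m m' b; rewrite !scale1r.
split; first split.
- move=> c [x1 x2] [y1 y2] [z1 z2]; rewrite /hat_mul /=.
  by rewrite mulBl actLPl actRPl; congr (_, _); rewrite addrACA -scalerDr.
- move=> c [x1 x2] [y1 y2] [z1 z2]; rewrite /hat_mul /=.
  by rewrite mulBr actLPr actRPr; congr (_, _); rewrite addrACA -scalerDr.
move=> [x1 x2] [y1 y2] [z1 z2]; rewrite /hat_mul /= mulBA.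
by rewrite actLDr actRDl actLM actRM actLR !addrA.
Qed.

End SplitNullExtension.

Section Quotient.
Variables (k : fieldType) (V : lmodType k).

Record subspace := Subspace {
  in_subspace :> V -> Prop;
  subspace0 : in_subspace 0;
  subspaceP : forall c u v,
    in_subspace u -> in_subspace v -> in_subspace (c *: u + v) }.

Variable S : subspace.

Lemma subspaceD u v : S u -> S v -> S (u + v).
Proof. by move=> Su Sv; have := subspaceP 1 Su Sv; rewrite scale1r. Qed.
Lemma subspaceZ c u : S u -> S (c *: u).
Proof. by move=> Su; have := subspaceP c Su (subspace0 S); rewrite addr0. Qed.
Lemma subspaceB u v : S u -> S v -> S (u - v).
Proof. by move=> Su Sv; rewrite -scaleN1r addrC; apply: subspaceP. Qed.

(* Each coset is represented by an epsilon-chosen point that depends only on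
   the coset; the quotient is the subtype of these representatives. *)
Definition canon (x : V) : V := epsilon (inhabits 0) (fun y => S (y - x)).

Lemma canon_spec x : S (canon x - x).
Proof.
apply: (epsilon_spec (inhabits 0) (fun y => S (y - x))).
by exists x; rewrite subrr; apply: subspace0.
Qed.

Lemma canon_eq x y : S (x - y) -> canon x = canon y.
Proof.
move=> Sxy; rewrite /canon; congr epsilon; apply: functional_extensionality => z.
apply: propositional_extensionality; split=> Sz.
  by have := subspaceD Sz Sxy; rewrite addrA subrK.
by have := subspaceB Sz Sxy; rewrite opprB addrA subrK.
Qed.

Lemma canon_idem x : canon (canon x) = canon x.
Proof. exact/canon_eq/canon_spec. Qed.

Record quot := Quot { qval : V; _ : canon qval == qval }.
HB.instance Definition _ := [isSub for qval].
HB.instance Definition _ := [Choice of quot by <:].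

Definition cls (x : V) : quot := @Quot (canon x) (introT eqP (canon_idem x)).

Lemma cls_qval_sub x : S (qval (cls x) - x).
Proof. exact: canon_spec. Qed.

Lemma clsP x y : S (x - y) <-> cls x = cls y.
Proof.
split=> [Sxy|/(congr1 qval) /= exy]; first exact/val_inj/canon_eq.
have := subspaceB (canon_spec y) (canon_spec x).
by rewrite exy opprB addrC addrA subrK.
Qed.

Lemma qvalK q : cls (qval q) = q.
Proof. by apply: val_inj => /=; apply/eqP; case: q. Qed.

Lemma cls_surj q : exists x, q = cls x.
Proof. by exists (qval q); rewrite qvalK. Qed.

Definition qadd p q := cls (qval p + qval q).
Definition qopp q := cls (- qval q).
Definition qscale c q := cls (c *: qval q).

Lemma qaddE x y : qadd (cls x) (cls y) = cls (x + y).
Proof.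
apply/clsP; rewrite opprD addrACA.
exact: subspaceD (cls_qval_sub x) (cls_qval_sub y).
Qed.
Lemma qoppE x : qopp (cls x) = cls (- x).
Proof.
apply/clsP; rewrite opprK addrC.
by have := subspaceZ (-1) (cls_qval_sub x); rewrite scaleN1r opprB.
Qed.
Lemma qscaleE c x : qscale c (cls x) = cls (c *: x).
Proof. by apply/clsP; have := subspaceZ c (cls_qval_sub x); rewrite scalerBr. Qed.

Lemma qaddA : associative qadd.
Proof.
move=> p q s; have [x ->] := cls_surj p; have [y ->] := cls_surj q.
by have [z ->] := cls_surj s; rewrite !qaddE addrA.
Qed.
Lemma qaddC : commutative qadd.
Proof.
by move=> p q; have [x ->] := cls_surj p; have [y ->] := cls_surj q; rewrite !qaddE addrC.
Qed.
Lemma qadd0 : left_id (cls 0) qadd.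
Proof. by move=> p; have [x ->] := cls_surj p; rewrite qaddE add0r. Qed.
Lemma qaddN : left_inverse (cls 0) qopp qadd.
Proof. by move=> p; have [x ->] := cls_surj p; rewrite qoppE qaddE addNr. Qed.
HB.instance Definition _ := GRing.isZmodule.Build quot qaddA qaddC qadd0 qaddN.

Lemma clsD x y : cls (x + y) = cls x + cls y.
Proof. by rewrite -qaddE. Qed.

Lemma qscaleA a b q : qscale a (qscale b q) = qscale (a * b) q.
Proof. by have [x ->] := cls_surj q; rewrite !qscaleE scalerA. Qed.
Lemma qscale1 : left_id 1 qscale.
Proof. by move=> q; have [x ->] := cls_surj q; rewrite qscaleE scale1r. Qed.
Lemma qscaleDr : right_distributive qscale +%R.
Proof.
move=> a p q; have [x ->] := cls_surj p; have [y ->] := cls_surj q.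
by rewrite -clsD !qscaleE -clsD scalerDr.
Qed.
Lemma qscaleDl q : {morph qscale^~ q : a b / a + b}.
Proof. by move=> a b; have [x ->] := cls_surj q; rewrite !qscaleE -clsD scalerDl. Qed.
HB.instance Definition _ :=
  GRing.Zmodule_isLmodule.Build k quot qscaleA qscale1 qscaleDr qscaleDl.

Lemma cls_is_linear : linear cls.
Proof. by move=> c x y; rewrite clsD -qscaleE. Qed.
HB.instance Definition _ := GRing.isLinear.Build k V quot *:%R cls cls_is_linear.

Lemma cls_eq0 x : S x -> cls x = 0.
Proof. by move=> Sx; apply/clsP; rewrite subr0. Qed.

End Quotient.

Section DialgebraQuotient.
Variables (k : fieldType) (D : lmodType k) (l r : D -> D -> D).

Inductive lr_span : D -> Prop :=
| lr_span0 : lr_span 0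
| lr_span_gen a b : lr_span (l a b - r a b)
| lr_spanP c u v : lr_span u -> lr_span v -> lr_span (c *: u + v).

Definition lr_subspace : subspace D := Subspace lr_span0 lr_spanP.
Definition Dbar := quot lr_subspace.
Local Notation cl := (cls lr_subspace).

Lemma cl_surj (q : Dbar) : exists x, q = cl x.
Proof. exact: cls_surj. Qed.

Lemma dispan_lr_span (J : lmodType k) (lj rj : J -> J -> J) (f : {linear J -> D}) :
  (forall a b, f (lj a b) = plus_left l r (f a) (f b) /\
               f (rj a b) = plus_right l r (f a) (f b)) ->
  forall v, dispan lj rj v -> lr_span (f v).
Proof.
move=> f_hom v [n [c [a [b ->]]]]; rewrite linear_sum.
apply: big_ind => [|x y|i _]; [exact: lr_span0 | exact: (subspaceD (S:=lr_subspace)) | ].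
rewrite linearZ_LR linearB (f_hom _ _).1 (f_hom _ _).2 /plus_left /plus_right.
rewrite -scalerBr opprD addrACA -[X in _ + X]opprB.
apply: (subspaceZ (S:=lr_subspace)); apply: (subspaceZ (S:=lr_subspace)).
exact: (subspaceB (S:=lr_subspace) (lr_span_gen _ _) (lr_span_gen _ _)).
Qed.

Hypothesis D_assoc : assoc_dialgebra l r.

Let l_bilinear : bilinear_op l. Proof. by case: D_assoc. Qed.
Let r_bilinear : bilinear_op r. Proof. by case: D_assoc. Qed.
Let rl_l x y z : l (r x y) z = l (l x y) z. Proof. by case: D_assoc. Qed.
Let rl_r x y z : r x (l y z) = r x (r y z). Proof. by case: D_assoc. Qed.
Let llA x y z : l (l x y) z = l x (l y z). Proof. by case: D_assoc => _ _ _ _ []. Qed.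
Let rrA x y z : r (r x y) z = r x (r y z). Proof. by case: D_assoc => _ _ _ _ []. Qed.
Let lrA x y z : r (l x y) z = l x (r y z). Proof. by case: D_assoc => _ _ _ _ []. Qed.

Lemma lr_span_l0 s z : lr_span s -> l s z = 0.
Proof.
elim=> [|a b|c u v _ IHu _ IHv]; first exact: bilin0l.
  by rewrite (bilinBl l_bilinear) rl_l subrr.
by rewrite (bilinPl l_bilinear) IHu IHv scaler0 addr0.
Qed.

Lemma lr_span_r0 s z : lr_span s -> r z s = 0.
Proof.
elim=> [|a b|c u v _ IHu _ IHv]; first exact: bilin0r.
  by rewrite (bilinBr r_bilinear) rl_r subrr.
by rewrite (bilinPr r_bilinear) IHu IHv scaler0 addr0.
Qed.

Lemma lr_span_l s z : lr_span s -> lr_span (l z s).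
Proof.
elim=> [|a b|c u v _ IHu _ IHv]; first by rewrite (bilin0r l_bilinear); apply: lr_span0.
  by rewrite (bilinBr l_bilinear) -llA -lrA; apply: lr_span_gen.
by rewrite (bilinPr l_bilinear); apply: lr_spanP.
Qed.

Definition mulbar (u v : Dbar) : Dbar := cl (l (qval u) (qval v)).
Definition actl (u : Dbar) (d : D) : D := l (qval u) d.
Definition actr (d : D) (u : Dbar) : D := r d (qval u).

Lemma mulbar_cl x y : mulbar (cl x) (cl y) = cl (l x y).
Proof.
apply/clsP; have Sx := cls_qval_sub lr_subspace x; have Sy := cls_qval_sub lr_subspace y.
set x' := qval _ in Sx; set y' := qval _ in Sy.
have -> : l x' y' - l x y = l (x' - x) y' + l x (y' - y).
  by rewrite (bilinBl l_bilinear) (bilinBr l_bilinear) addrA subrK.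
by rewrite (lr_span_l0 _ Sx) add0r; apply: lr_span_l.
Qed.

Lemma actl_cl x d : actl (cl x) d = l x d.
Proof.
apply/eqP; rewrite -subr_eq0 /actl -(bilinBl l_bilinear).
by rewrite (lr_span_l0 _ (cls_qval_sub lr_subspace x)).
Qed.

Lemma actr_cl x d : actr d (cl x) = r d x.
Proof.
apply/eqP; rewrite -subr_eq0 /actr -(bilinBr r_bilinear).
by rewrite (lr_span_r0 _ (cls_qval_sub lr_subspace x)).
Qed.

Lemma cl_r x y : cl (r x y) = cl (l x y).
Proof. exact/esym/clsP/lr_span_gen. Qed.

Lemma assoc_algebra_Dbar_hat : assoc_algebra (hat_mul mulbar actl actr).
Proof.
have cl_lin c x y : c *: cl x + cl y = cl (c *: x + y) by rewrite linearP.
apply: assoc_algebra_hat.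
- split; first split.
  + move=> c u u' v; have [x ->] := cl_surj u; have [x' ->] := cl_surj u'.
    by have [y ->] := cl_surj v; rewrite cl_lin !mulbar_cl (bilinPl l_bilinear) linearP.
  + move=> c u u' v; have [x ->] := cl_surj u; have [x' ->] := cl_surj u'.
    by have [y ->] := cl_surj v; rewrite cl_lin !mulbar_cl (bilinPr l_bilinear) linearP.
  move=> u v w; have [x ->] := cl_surj u; have [y ->] := cl_surj v.
  by have [z ->] := cl_surj w; rewrite !mulbar_cl llA.
- move=> c u u' m; have [x ->] := cl_surj u; have [x' ->] := cl_surj u'.
  by rewrite cl_lin !actl_cl (bilinPl l_bilinear).
- by move=> c u m m'; apply: (bilinPr l_bilinear).
- by move=> c m m' u; apply: (bilinPl r_bilinear).
- move=> c m u u'; have [x ->] := cl_surj u; have [x' ->] := cl_surj u'.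
  by rewrite cl_lin !actr_cl (bilinPr r_bilinear).
- move=> u v m; have [x ->] := cl_surj u; have [y ->] := cl_surj v.
  by rewrite mulbar_cl !actl_cl llA.
- move=> m u v; have [x ->] := cl_surj u; have [y ->] := cl_surj v.
  by rewrite mulbar_cl !actr_cl rl_r rrA.
move=> u m v; have [x ->] := cl_surj u; have [y ->] := cl_surj v.
by rewrite !actl_cl !actr_cl lrA.
Qed.

Lemma cl_plus_left x y :
  cl (plus_left l r x y) = Defs.half k *: (mulbar (cl x) (cl y) + mulbar (cl y) (cl x)).
Proof. by rewrite /plus_left linearZ linearD /= cl_r !mulbar_cl. Qed.

Lemma plus_left_act x d :
  plus_left l r x d = Defs.half k *: (actl (cl x) d + actr d (cl x)).
Proof. by rewrite actl_cl actr_cl. Qed.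

Lemma plus_right_act d x :
  plus_right l r d x = Defs.half k *: (actr d (cl x) + actl (cl x) d).
Proof. by rewrite actl_cl actr_cl. Qed.

End DialgebraQuotient.

Lemma linear_factor (k : fieldType) (U V W : lmodType k) (pi : {linear U -> V})
    (phi : {linear U -> W}) :
  (forall x : V, exists a : U, pi a = x) -> (forall v, pi v = 0 -> phi v = 0) ->
  exists g : {linear V -> W}, forall a, g (pi a) = phi a.
Proof.
move=> pi_surj phi0.
pose lift x := proj1_sig (constructive_indefinite_description _ (pi_surj x)).
have liftK x : pi (lift x) = x.
  by rewrite /lift; case: constructive_indefinite_description.
have g_pi a : phi (lift (pi a)) = phi a.
  by apply/eqP; rewrite -subr_eq0 -linearB phi0 // linearB liftK subrr.
have g_lin : linear (phi \o lift).
  by move=> c x y; rewrite /= -[in LHS](liftK x) -[in LHS](liftK y) -linearP g_pi linearP.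
exists (HB.pack_for {linear V -> W} (phi \o lift)
  (GRing.isLinear.Build k V W *:%R _ g_lin)).
exact: g_pi.
Qed.

Theorem mainTheorem19 (k : fieldType) (hk : [pchar k] =i pred0)
  (J : lmodType k) (lj rj : J -> J -> J)
  (HJ : special_jordan_dialgebra lj rj)
  (Jbar : lmodType k) (pi : {linear J -> Jbar})
  (pi_surj : forall x : Jbar, exists a : J, pi a = x)
  (pi_ker : forall v : J, pi v = 0 <-> dispan lj rj v)
  (mulb : Jbar -> Jbar -> Jbar)
  (Hmulb : forall a b : J, mulb (pi a) (pi b) = pi (lj a b))
  (actL : Jbar -> J -> J) (HactL : forall a v : J, actL (pi a) v = lj a v)
  (actR : J -> Jbar -> J) (HactR : forall v a : J, actR v (pi a) = rj v a)
  (Hbar : special_jordan_algebra mulb) :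
  special_jordan_algebra (V := (Jbar * J)%type) (hat_mul mulb actL actR).
Proof.
have [D [l [r [f [D_assoc f_inj f_hom]]]]] := HJ.
have [A [mA [fA [A_assoc fA_inj fA_hom]]]] := Hbar.
have [g g_pi] : exists g : {linear Jbar -> Dbar l r},
    forall a, g (pi a) = cls (lr_subspace l r) (f a).
  apply: (linear_factor (phi := cls (lr_subspace l r) \o f) pi_surj) => v.
  by move=> /pi_ker /(dispan_lr_span f_hom) /(cls_eq0 (S := lr_subspace l r)).
pose F (p : Jbar * J) : A * (Dbar l r * D) := (fA p.1, (g p.1, f p.2)).
have F_lin : linear F by move=> c [x1 x2] [y1 y2]; rewrite /F /= !linearP.
exists (A * (Dbar l r * D))%type.
exists (prod_mul mA (hat_mul (@mulbar _ _ l r) (@actl _ _ l r) (@actr _ _ l r))).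
exists (HB.pack_for {linear (Jbar * J)%type -> (A * (Dbar l r * D))%type} F
  (GRing.isLinear.Build k _ _ *:%R F F_lin)); split => /=.
- exact/assoc_algebra_prod/assoc_algebra_Dbar_hat.
- by move=> [x1 x2] [y1 y2] [/fA_inj -> _ /f_inj ->].
move=> [x m] [y n]; have [a <-] := pi_surj x; have [b <-] := pi_surj y.
rewrite /F /prod_mul /hat_mul /=; congr (_, (_, _)).
- exact: fA_hom.
- by rewrite Hmulb !g_pi (f_hom a b).1 (cl_plus_left D_assoc).
rewrite HactL HactR linearD (f_hom a n).1 (f_hom m b).2 !g_pi.
rewrite (plus_left_act D_assoc) (plus_right_act D_assoc) -scalerDr.
by rewrite addrACA [actr (f n) _ + _]addrC.
Qed.
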